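(* For every positive integer $n$, the order supergraph $\mathcal{S}(A_n)$ of the alternating group $A_n$ is cyclically separable if and only if $n \geq 4$.
   Context: All graphs are simple and undirected. For a finite group $G$, the order supergraph $\mathcal{S}(G)$ is the graph with vertex set $G$ in which two distinct vertices $x,y$ are adjacent if and only if the order of $x$ divides the order of $y$ or the order of $y$ divides the order of $x$. For a graph $\Gamma$, a vertex cutset is a set $S$ of vertices such that $\Gamma - S$ is disconnected; a cyclic vertex cutset is a vertex cutset $S$ such that $\Gamma - S$ has at least two connected components each of which contains a cycle. $\Gamma$ is called cyclically separable if it has a cyclic vertex cutset. *)

From mathcomp Require Import all_boot all_fingroup all_solvable.
Set Implicit Arguments.
Unset Strict Implicit.
Unset Printing Implicit Defensive.

Section Graphs.
Variable T : finType.
(* A simple undirected graph with vertex set V : {set T} and adjacency e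
   (assumed symmetric; loops are excluded by [rel_in] below). *)
Variables (V : {set T}) (e : rel T).

Definition rel_in (W : {set T}) : rel T :=
  [rel x y | [&& x \in W, y \in W, x != y & e x y]].

Definition component (W : {set T}) (x : T) : {set T} :=
  [set y in W | connect (rel_in W) x y].

Definition is_cycle (W : {set T}) (s : seq T) : bool :=
  [&& 2 < size s, uniq s, all (fun v => v \in W) s & path.cycle (rel_in W) s].

Definition contains_cycle (W C : {set T}) : Prop :=
  exists s : seq T, is_cycle W s /\ {subset s <= C}.

Definition cyclic_vertex_cutset (S : {set T}) : Prop :=
  S \subset V /\
  exists x y : T, [/\ x \in V :\: S, y \in V :\: S,
    ~~ connect (rel_in (V :\: S)) x y,
    contains_cycle (V :\: S) (component (V :\: S) x) &
    contains_cycle (V :\: S) (component (V :\: S) y)].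

Definition cyclically_separable : Prop :=
  exists S : {set T}, cyclic_vertex_cutset S.
End Graphs.

Definition order_super_rel (gT : finGroupType) : rel gT :=
  [rel x y | (x != y) && ((#[x]%g %| #[y]%g) || (#[y]%g %| #[x]%g))].

Definition order_supergraph_cyclically_separable (gT : finGroupType)
  (G : {set gT}) : Prop :=
  cyclically_separable G (@order_super_rel gT).

From mathcomp Require Import all_boot all_fingroup all_solvable.
Set Implicit Arguments. Unset Strict Implicit. Unset Printing Implicit Defensive.

(* Removing a cyclic vertex cutset leaves two disjoint components of at least
   three vertices each, so a cyclically separable graph has at least six
   vertices, whereas |A_n| <= 3 for n <= 3.  Conversely, elements of equal
   order are adjacent in the order supergraph while orders 2 and 3 are
   incomparable under divisibility; for n >= 4 three double transpositions and
   three 3-cycles of A_n span two triangles with no edge between them, and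
   deleting every other vertex separates the two. *)

Section CyclicSeparation.
Variables (T : finType) (V : {set T}) (e : rel T).

Lemma contains_cycle_card (W C : {set T}) : contains_cycle e W C -> 2 < #|C|.
Proof.
case=> s [/and4P [size_s uniq_s _ _] sC]; apply: leq_trans size_s _.
by rewrite -(card_uniqP uniq_s); apply/subset_leq_card/subsetP.
Qed.

Lemma is_cycle_contains_cycle (X W : {set T}) (x : T) (p : seq T) :
  X \subset W -> is_cycle e X (x :: p) -> contains_cycle e W (component e W x).
Proof.
move=> sXW /and4P [size_s uniq_s all_X cycle_X].
have sub_rel : subrel (rel_in e X) (rel_in e W).
  by move=> u v /and4P [uX vX uv euv]; rewrite /rel_in /= !(subsetP sXW) ?uv.
have all_W : all (fun v => v \in W) (x :: p).
  by apply: sub_all all_X => u /(subsetP sXW).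
exists (x :: p); split.
  by rewrite /is_cycle size_s uniq_s all_W (sub_cycle sub_rel).
move=> y py; rewrite inE (allP all_W y py) /=.
apply: path_connect py.
by move: (sub_cycle sub_rel cycle_X); rewrite /= rcons_path => /andP [].
Qed.

Lemma triangle_is_cycle (X : {set T}) (x y z : T) :
  rel_in e X x y -> rel_in e X y z -> rel_in e X z x -> is_cycle e X [:: x; y; z].
Proof.
move=> exy eyz ezx; move: (exy) (eyz) (ezx).
case/and4P=> xX yX xy _ /and4P [_ zX yz _] /and4P [_ _ zx _].
by rewrite /is_cycle /= !inE negb_or xy yz (eq_sym x z) zx xX yX zX exy eyz ezx.
Qed.

Lemma clique_is_cycle (X : {set T}) :
  {in X &, forall x y, x != y -> e x y} -> 2 < #|X| -> exists s, is_cycle e X s.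
Proof.
move=> clique /card_gt2P [x [y [z [[xX yX zX] [xy yz zx]]]]].
exists [:: x; y; z]; apply: triangle_is_cycle.
all: by rewrite /rel_in /= ?xX ?yX ?zX ?xy ?yz ?zx clique.
Qed.

Hypothesis e_sym : symmetric e.

Lemma rel_in_sym (W : {set T}) : symmetric (rel_in e W).
Proof. by move=> x y; rewrite /rel_in /= andbCA eq_sym e_sym. Qed.

Lemma disjoint_components (W : {set T}) (x y : T) :
  ~~ connect (rel_in e W) x y -> [disjoint component e W x & component e W y].
Proof.
move=> not_xy; apply/pred0P => z; rewrite /= !inE.
apply/negP => /andP [/andP [_ xz] /andP [_ yz]]; case/negP: not_xy.
by apply: connect_trans xz _; rewrite (sym_connect_sym (rel_in_sym W)).
Qed.

Lemma cyclically_separable_card : cyclically_separable V e -> 5 < #|V|.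
Proof.
case=> S [_ [x [y [_ _ not_xy cycle_x cycle_y]]]].
set W := V :\: S in not_xy cycle_x cycle_y.
have [_] := leq_card_setU (component e W x) (component e W y).
rewrite disjoint_components // => /eqP card_U.
have sub_V : component e W x :|: component e W y \subset V.
  by apply/subsetP=> u; rewrite !inE => /orP [] /andP [/andP []].
apply: leq_trans (subset_leq_card sub_V).
rewrite card_U; exact: leq_add (contains_cycle_card cycle_x) (contains_cycle_card cycle_y).
Qed.

Lemma cyclically_separable_of_cycles (X Y : {set T}) (s t : seq T) :
  X :|: Y \subset V -> [disjoint X & Y] -> {in X & Y, forall x y, ~~ e x y} ->
  is_cycle e X s -> is_cycle e Y t -> cyclically_separable V e.
Proof.
move=> sXYV disXY no_edge.
case: s => [|x p] cycle_s; first by case/and4P: cycle_s.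
case: t => [|y q] cycle_t; first by case/and4P: cycle_t.
have xX : x \in X by case/and4P: cycle_s => _ _ /andP [].
have yY : y \in Y by case/and4P: cycle_t => _ _ /andP [].
set W := X :|: Y.
have VW : V :\: (V :\: W) = W by rewrite setDDr setDv set0U; apply/setIidPr.
(* Inside W every edge stays within X or within Y. *)
have closed_X : closed (rel_in e W) (mem X).
  move=> u v /and4P [uW vW _ euv] /=.
  case: (boolP (u \in X)) => uX; case: (boolP (v \in X)) => vX //=.
    by move: vW; rewrite inE (negPf vX) /= => /(no_edge _ _ uX); rewrite euv.
  by move: uW; rewrite inE (negPf uX) /= => /(no_edge _ _ vX); rewrite e_sym euv.
exists (V :\: W); split; first exact: subsetDl.
exists x, y; rewrite VW !inE xX yY orbT; split=> //.
- apply/negP => /(closed_connect closed_X); rewrite xX => /esym yX.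
  by move: (disXY); rewrite disjoint_subset => /subsetP /(_ y yX); rewrite inE yY.
- by apply: is_cycle_contains_cycle cycle_s; apply: subsetUl.
- by apply: is_cycle_contains_cycle cycle_t; apply: subsetUr.
Qed.

End CyclicSeparation.

Section OrderSupergraph.
Variable gT : finGroupType.
Local Notation e := (@order_super_rel gT).

Lemma order_super_rel_sym : symmetric e.
Proof. by move=> x y; rewrite /order_super_rel /= eq_sym orbC. Qed.

Lemma order_supergraph_cyclically_separable_of_orders (G : {set gT}) (p q : nat) :
  ~~ (p %| q) -> ~~ (q %| p) ->
  2 < #|[set x in G | #[x]%g == p]| -> 2 < #|[set x in G | #[x]%g == q]| ->
  order_supergraph_cyclically_separable G.
Proof.
move=> pq qp; set X := [set x in G | _]; set Y := [set x in G | _] => cardX cardY.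
have clique r : {in [set x in G | #[x]%g == r] &, forall x y, x != y -> e x y}.
  move=> x y; rewrite !inE /order_super_rel /=.
  by move=> /andP [_ /eqP->] /andP [_ /eqP->] ->; rewrite dvdnn.
have [s cycle_s] := clique_is_cycle (clique p) cardX.
have [t cycle_t] := clique_is_cycle (clique q) cardY.
apply: (cyclically_separable_of_cycles order_super_rel_sym _ _ _ cycle_s cycle_t).
- by apply/subsetP=> x; rewrite !inE => /orP [] /andP [].
- apply/pred0P=> x; rewrite /= !inE.
  by apply/negP=> /andP [/andP [_ /eqP ox] /andP [_ /eqP oy]]; rewrite -ox oy dvdnn in pq.
- move=> x y; rewrite !inE /order_super_rel /=.
  by move=> /andP [_ /eqP->] /andP [_ /eqP->]; rewrite (negPf pq) (negPf qp) andbF.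
Qed.

End OrderSupergraph.

Section Transpositions.
Local Open Scope group_scope.
Variable T : finType.

Lemma perm_neq_at (s t : {perm T}) (x : T) : s x != t x -> s != t.
Proof. by apply: contraNneq => ->. Qed.

Lemma tperm_mul_Alt (x y z w : T) :
  x != y -> z != w -> tperm x y * tperm z w \in 'Alt_T.
Proof. by move=> xy zw; rewrite Alt_even odd_permM !odd_tperm xy zw. Qed.

Lemma order_tperm_mul_disjoint (a b c d : T) :
  a != b -> a != c -> a != d -> b != c -> b != d -> #[tperm a b * tperm c d] = 2.
Proof.
move=> ab ac ad bc bd.
have comm : commute (tperm a b) (tperm c d).
  by rewrite /commute conjgC tpermJ !tpermD // eq_sym.
apply: nt_prime_order => //.
  by rewrite expgMn // !expgS !expg0 !mulg1 !tperm2 mulg1.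
by apply: (@perm_neq_at _ _ a); rewrite perm1 permM tpermL tpermD // eq_sym.
Qed.

Lemma tperm_sandwich (x y z : T) : x != y -> x != z -> y != z ->
  tperm x y * tperm x z * tperm x y = tperm y z.
Proof.
move=> xy xz yz.
by rewrite -mulgA -{1}(tpermV x y) -conjgE tpermJ tpermL tpermD // eq_sym.
Qed.

Lemma order_tperm_mul_3cycle (a b c : T) :
  a != b -> a != c -> b != c -> #[tperm a b * tperm a c] = 3.
Proof.
move=> ab ac bc; apply: nt_prime_order => //.
  have -> : (tperm a b * tperm a c) ^+ 3 =
      (tperm a b * tperm a c * tperm a b) * (tperm a c * tperm a b * tperm a c).
    by rewrite !expgS expg0 mulg1 !mulgA.
  by rewrite !tperm_sandwich // ?[tperm c b]tpermC ?tperm2 // eq_sym.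
by apply: (@perm_neq_at _ _ a); rewrite perm1 permM tpermL tpermD // eq_sym.
Qed.

Variables (a b c d : T).
Hypotheses (ab : a != b) (ac : a != c) (ad : a != d).
Hypotheses (bc : b != c) (bd : b != d) (cd : c != d).

Lemma Alt_order2_gt2 : 2 < #|[set x in 'Alt_T | #[x] == 2]|.
Proof.
have mem w x y z : w != x -> w != y -> w != z -> x != y -> x != z -> y != z ->
    tperm w x * tperm y z \in [set x in 'Alt_T | #[x] == 2].
  by move=> *; apply/setIdP; rewrite tperm_mul_Alt ?order_tperm_mul_disjoint.
apply/card_gt2P.
exists (tperm a b * tperm c d), (tperm a c * tperm b d), (tperm a d * tperm b c).
split; split; rewrite ?mem //; try by rewrite eq_sym.
all: apply: (@perm_neq_at _ _ a).
all: by rewrite !permM !tpermL !tpermD // eq_sym.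
Qed.

Lemma Alt_order3_gt2 : 2 < #|[set x in 'Alt_T | #[x] == 3]|.
Proof.
have mem x y z : x != y -> x != z -> y != z ->
    tperm x y * tperm x z \in [set x in 'Alt_T | #[x] == 3].
  by move=> *; apply/setIdP; rewrite tperm_mul_Alt ?order_tperm_mul_3cycle.
apply/card_gt2P.
exists (tperm a b * tperm a c), (tperm a c * tperm a b), (tperm a b * tperm a d).
split; split; rewrite ?mem //; try by rewrite eq_sym.
- by apply: (@perm_neq_at _ _ a); rewrite !permM !tpermL !tpermD // eq_sym.
- by apply: (@perm_neq_at _ _ a); rewrite !permM !tpermL !tpermD // eq_sym.
- apply: (@perm_neq_at _ _ c).
  by rewrite !permM [tperm a b c]tpermD // tpermR tpermD // eq_sym.
Qed.

End Transpositions.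

Lemma card_Alt_ord_lt6 (n : nat) : n < 4 -> #|('Alt_('I_n))%g| < 6.
Proof.
case: n => [|[|[|[|n]]]] // _; last first.
  have := @card_Alt 'I_3; rewrite card_ord => /(_ isT) card_A.
  by rewrite -(ltn_pmul2l (isT : 0 < 2)) card_A.
all: by apply: leq_ltn_trans (subset_leq_card (subsetT _)) _; rewrite cardsT card_Sn.
Qed.

Theorem mainTheorem7 (n : nat) (hn : 0 < n) :
  order_supergraph_cyclically_separable ('Alt_('I_n))%g
  <-> 4 <= n.
Proof.
split.
  move=> /(cyclically_separable_card (@order_super_rel_sym _)).
  by apply: contraLR; rewrite -ltnNge -leqNgt; apply: card_Alt_ord_lt6.
move=> le4n; pose pt k (lt_k4 : k < 4) := Ordinal (leq_trans lt_k4 le4n).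
apply: (@order_supergraph_cyclically_separable_of_orders _ _ 2 3) => //.
  exact: (@Alt_order2_gt2 _ (pt 0 isT) (pt 1 isT) (pt 2 isT) (pt 3 isT)).
exact: (@Alt_order3_gt2 _ (pt 0 isT) (pt 1 isT) (pt 2 isT) (pt 3 isT)).
Qed.
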